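(* On a two-letter alphabet, there exists a $2$-regular word of length $n\ge 1$ if and only if $n=4k$ for some integer $k\ge 2$.
   Context: For a word $u=u_1\cdots u_m$ over an alphabet $\mathcal A$ with $b$ letters and an integer $r\ge -1$, $u$ is $r$-regular if for every $k=0,1,\dots,r$ the sum $\sum_{1\le t\le m,\ u_t=c} t^k$ is the same for all letters $c\in\mathcal A$ (a letter not occurring contributes $0$). Here $b=2$. *)

From mathcomp Require Import all_boot.
Set Implicit Arguments. Unset Strict Implicit. Unset Printing Implicit Defensive.

(* For a word u = u_1 ... u_m (an m.-tuple over the alphabet A; position
   t : 'I_m corresponds to the 1-based position t+1), the power sum of
   letter c with exponent k:  \sum_{1<=t<=m, u_t = c} t^k. *)
Definition power_sum (A : eqType) (m : nat) (u : m.-tuple A) (c : A) (k : nat) : nat :=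
  \sum_(t < m | tnth u t == c) (t.+1) ^ k.

Definition regular (A : finType) (m : nat) (r : nat) (u : m.-tuple A) : Prop :=
  forall k : nat, k <= r -> forall c d : A, power_sum u c k = power_sum u d k.

From mathcomp Require Import all_boot zify.
Set Implicit Arguments. Unset Strict Implicit.

(* Over a two-letter alphabet {a, b} the power sums of b are the full sums
   \sum_(t < n) t.+1 ^ k minus those of a, so regularity says that the set
   of positions of a carries half of every full sum.
   - Necessity: for k = 0 this gives n = 2 p0, for k = 1 it gives
     4 p1 = n (n + 1), whence 4 divides n; length 4 is excluded by
     inspecting the 16 words.
   - Sufficiency: a word is described by the predicate f of the positions
     carrying a ("balanced" below).  The Thue-Morse block abbabaab is
     balanced up to degree 2 at every offset, so appending copies of it
     preserves balance.  Starting from the empty word (lengths 8m) or from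
     the balanced word ababbbaaabab of length 12 (lengths 12 + 8m) we reach
     every multiple of 4 that is at least 8. *)

Definition balanced (f : nat -> bool) (r n : nat) : Prop :=
  forall k, k <= r ->
    \sum_(0 <= t < n | f t) t.+1 ^ k = \sum_(0 <= t < n | ~~ f t) t.+1 ^ k.

Definition shift_balanced (g : nat -> bool) (r p : nat) : Prop :=
  forall x k, k <= r ->
    \sum_(0 <= j < p | g j) (j + x).+1 ^ k =
    \sum_(0 <= j < p | ~~ g j) (j + x).+1 ^ k.

Lemma balanced_periodic_ext (f g : nat -> bool) (r p s m : nat) :
  shift_balanced g r p ->
  (forall t, s <= t -> f t = g ((t - s) %% p)) ->
  balanced f r s -> balanced f r (s + p * m).
Proof.
move=> gbal fg fbal; elim: m => [|m IH]; first by rewrite muln0 addn0.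
move=> k hk; set x := s + p * m.
have -> : s + p * m.+1 = x + p by rewrite /x mulnS; lia.
have split_last (P : pred nat) :
    \sum_(0 <= t < x + p | P t) t.+1 ^ k =
    \sum_(0 <= t < x | P t) t.+1 ^ k + \sum_(0 <= j < p | P (j + x)) (j + x).+1 ^ k.
  by rewrite (big_cat_nat (leq0n x) (leq_addr p x)) /= -{2}(add0n x) big_addn addKn.
rewrite !split_last IH //; congr (_ + _).
have block j : j < p -> f (j + x) = g j.
  move=> ltjp; rewrite fg; last by rewrite /x; lia.
  have -> : j + x - s = m * p + j by rewrite /x; lia.
  by rewrite modnMDl modn_small.
transitivity (\sum_(0 <= j < p | g j) (j + x).+1 ^ k).
  by apply: congr_big_nat => // j /andP[_ ltjp]; rewrite block.
by rewrite gbal //; apply: congr_big_nat => // j /andP[_ ltjp]; rewrite block.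
Qed.

Lemma balanced0 (f : nat -> bool) (r : nat) : balanced f r 0.
Proof. by move=> k _; rewrite !big_geq. Qed.

(* The Thue-Morse block abbabaab, as the set {0, 3, 5, 6} of positions of a. *)
Definition thue_morse8 (j : nat) : bool := j \in [:: 0; 3; 5; 6].

Lemma thue_morse8_shift_balanced : shift_balanced thue_morse8 2 8.
Proof.
move=> x k hk; rewrite big_mkcond [RHS]big_mkcond !big_nat_recr //= !big_geq //.
by case: k hk => [|[|[|k]]] // _; rewrite ?expn0 ?expn1; nia.
Qed.

Definition base12 (t : nat) : bool := t \in [:: 0; 2; 6; 7; 8; 10].

Definition odd_word (t : nat) : bool :=
  if t < 12 then base12 t else thue_morse8 ((t - 12) %% 8).

Lemma odd_word_balanced12 : balanced odd_word 2 12.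
Proof.
move=> k hk; rewrite big_mkcond [RHS]big_mkcond !big_nat_recr //= !big_geq //.
by case: k hk => [|[|[|k]]].
Qed.

(* Every multiple 4k of 4 with k >= 2 is the length of a balanced word:
   8m = 0 + 8m for even k, 12 + 8m for odd k. *)
Lemma balanced_length (k : nat) : 2 <= k -> exists f, balanced f 2 (4 * k).
Proof.
move=> k_ge2; case/boolP: (odd k) => odd_k.
- exists odd_word.
  have -> : 4 * k = 12 + 8 * (k./2 - 1).
    by move: (odd_double_half k); rewrite odd_k -muln2 /=; lia.
  apply: (balanced_periodic_ext _ thue_morse8_shift_balanced) odd_word_balanced12.
  by move=> t le12t; rewrite /odd_word ltnNge le12t.
- exists (fun t => thue_morse8 (t %% 8)).
  have -> : 4 * k = 0 + 8 * k./2.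
    by move: (odd_double_half k); rewrite (negbTE odd_k) -muln2 /=; lia.
  apply: (balanced_periodic_ext _ thue_morse8_shift_balanced) (@balanced0 _ _).
  by move=> t _; rewrite subn0.
Qed.

Lemma double_sum_succ (n : nat) : 2 * \sum_(t < n) t.+1 = n * n.+1.
Proof. by elim: n => [|n IH]; rewrite ?big_ord0 // big_ord_recr /= mulnDr IH; lia. Qed.

Lemma card2_letters (A : finType) :
  #|A| = 2 -> exists a b : A, a != b /\ forall c, c = a \/ c = b.
Proof.
move=> cardA; have : 1 < #|A| by rewrite cardA.
case/card_gt1P => a [b [_ _ ab]]; exists a, b; split => // c.
case: (eqVneq c a) => [->|ca]; first by left.
case: (eqVneq c b) => [->|cb]; first by right.
have := max_card [set c; a; b].
by rewrite cardA -setUA cardsU1 cards2 !inE (negbTE ca) (negbTE cb) ab.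
Qed.

Section TwoLetters.

Variables (A : finType) (a b : A).
Hypothesis a_neq_b : a != b.
Hypothesis a_or_b : forall c : A, c = a \/ c = b.

Lemma power_sum_other (n : nat) (u : n.-tuple A) (k : nat) :
  power_sum u b k = \sum_(t < n | tnth u t != a) t.+1 ^ k.
Proof.
apply: eq_bigl => t; case: (a_or_b (tnth u t)) => ->; rewrite ?eqxx //.
  by rewrite (negbTE a_neq_b).
by rewrite eq_sym a_neq_b.
Qed.

Lemma power_sum_total (n : nat) (u : n.-tuple A) (k : nat) :
  power_sum u a k + power_sum u b k = \sum_(t < n) t.+1 ^ k.
Proof. by rewrite power_sum_other [RHS](bigID (fun t => tnth u t == a)). Qed.

(* A 1-regular word has length divisible by 4: with p0, p1 the power sums of
   a, the cases k = 0, 1 give n = 2 p0 and 4 p1 = n (n + 1). *)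
Lemma regular1_length (n : nat) (u : n.-tuple A) : regular 1 u -> 4 %| n.
Proof.
move=> reg_u.
have total0 := power_sum_total u 0; have total1 := power_sum_total u 1.
rewrite -(reg_u 0 isT a b) in total0; rewrite -(reg_u 1 isT a b) in total1.
have count_n : \sum_(t < n) t.+1 ^ 0 = n.
  by rewrite (eq_bigr (fun _ => 1)) // sum_nat_const card_ord muln1.
have gauss : 2 * \sum_(t < n) t.+1 ^ 1 = n * n.+1.
  by under eq_bigr do rewrite expn1; exact: double_sum_succ.
rewrite count_n in total0; rewrite -total1 in gauss.
move: (power_sum u a 0) (power_sum u a 1) total0 gauss => p0 p1 <- gauss.
by apply/dvdnP; exists (p1 - p0 ^ 2); nia.
Qed.

Lemma no_regular2_length4 (u : 4.-tuple A) : ~ regular 2 u.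
Proof.
move=> reg_u; have := reg_u 2 isT a b; have := reg_u 1 isT a b.
rewrite !power_sum_other /power_sum.
rewrite !(big_mkcond (fun t : 'I_4 => _ == a)) !(big_mkcond (fun t : 'I_4 => _ != a)).
by rewrite !big_ord_recr !big_ord0 /=; do 4 case: (tnth u _ == a).
Qed.

Definition word_of (f : nat -> bool) (n : nat) : n.-tuple A :=
  [tuple if f i then a else b | i < n].

Lemma power_sum_word_of (f : nat -> bool) (n k : nat) :
  power_sum (word_of f n) a k = \sum_(0 <= t < n | f t) t.+1 ^ k /\
  power_sum (word_of f n) b k = \sum_(0 <= t < n | ~~ f t) t.+1 ^ k.
Proof.
rewrite /power_sum !big_mkord; split; apply: eq_bigl => t; rewrite tnth_mktuple;
  by case: (f t); rewrite ?eqxx // ?(negbTE a_neq_b) // eq_sym (negbTE a_neq_b).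
Qed.

Lemma regular_word_of (f : nat -> bool) (r n : nat) :
  balanced f r n -> regular r (word_of f n).
Proof.
move=> bal_f k hk c d.
have ab : power_sum (word_of f n) a k = power_sum (word_of f n) b k.
  by have [-> ->] := power_sum_word_of f n k; exact: bal_f.
by case: (a_or_b c) => ->; case: (a_or_b d) => ->.
Qed.

End TwoLetters.

Theorem mainTheorem10 (A : finType) (hA : #|A| = 2) (n : nat) (hn : 1 <= n) :
  (exists u : n.-tuple A, regular 2 u) <-> (exists k : nat, 2 <= k /\ n = 4 * k).
Proof.
have [a [b [a_neq_b a_or_b]]] := card2_letters hA.
split=> [[u reg_u] | [k [k_ge2 ->]]].
- have /dvdnP [k def_n] : 4 %| n.
    by apply: (regular1_length a_neq_b a_or_b) => j hj; apply: reg_u; lia.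
  exists k; split; last by rewrite def_n mulnC.
  case: k def_n => [|[|k]] def_n //; first by rewrite def_n in hn.
  by subst n; case: (no_regular2_length4 a_neq_b a_or_b reg_u).
- have [f bal_f] := balanced_length k_ge2.
  by exists (word_of a b f (4 * k)); apply: regular_word_of.
Qed.
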